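(* Let $F$ be a recurrent set on which there exists a positive invariant probability distribution $\pi$. Let $X\subset F$ be a finite bifix code of finite $F$-degree $d$. Then $\sum_{x\in X}|x|\,\pi(x)=d$.
   Context: $A$ is a finite alphabet. $F\subset A^*$ is recurrent if it is nonempty, closed under factors, and for all $u,w\in F$ there is $v\in F$ with $uvw\in F$. An invariant probability distribution on $F$ is a map $\pi:F\to[0,1]$ with $\pi(1)=1$ ($1$ the empty word) and, for every $w\in F$, $\sum_{a\in A,\,wa\in F}\pi(wa)=\pi(w)=\sum_{a\in A,\,aw\in F}\pi(aw)$; it is positive if $\pi(w)>0$ for all $w\in F$. A bifix code is a set of nonempty words none of which is a proper prefix or proper suffix of another. A parse of $w$ with respect to $X$ is a triple $(v,x,u)$ with $w=vxu$, $v$ having no suffix in $X$, $x\in X^*$, $u$ having no prefix in $X$; $\delta_X(w)$ is their number and $d_F(X)=\max_{w\in F}\delta_X(w)$. *)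

From HB Require Import structures.
From mathcomp Require Import all_boot all_order all_algebra.
Set Implicit Arguments. Unset Strict Implicit. Unset Printing Implicit Defensive.
Import Order.TTheory GRing.Theory Num.Theory.
Local Open Scope ring_scope.

Section Words.
Variable A : finType.
Notation word := (seq A).

Definition factorial (F : pred word) : Prop :=
  forall u v w : word, F (u ++ v ++ w) -> F v.

Definition recurrent (F : pred word) : Prop :=
  (exists w, F w) /\ factorial F /\
  (forall u w, F u -> F w -> exists v, F v /\ F (u ++ v ++ w)).

(* invariant probability distribution on F (values only matter on F) *)
Definition invariant_prob (R : realFieldType) (F : pred word) (pi : word -> R) : Prop :=
  (forall w, F w -> 0 <= pi w <= 1) /\ pi [::] = 1 /\
  (forall w, F w ->
     \sum_(a : A | F (rcons w a)) pi (rcons w a) = pi w /\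
     \sum_(a : A | F (a :: w)) pi (a :: w) = pi w).

Definition positive_on (R : realFieldType) (F : pred word) (pi : word -> R) : Prop :=
  forall w, F w -> 0 < pi w.

Definition bifix_code (X : seq word) : Prop :=
  (forall x, x \in X -> x != [::]) /\
  (forall x y, x \in X -> y \in X -> prefix x y -> x = y) /\
  (forall x y, x \in X -> y \in X -> suffix x y -> x = y).

(* membership in X^* : x is a concatenation of words of X; fuel n suffices
   when n >= size x since each factor of X is nonempty *)
Fixpoint in_star_fuel (X : seq word) (n : nat) (x : word) : bool :=
  match n with
  | 0 => x == [::]
  | n'.+1 => (x == [::]) ||
       has (fun i => (take i x \in X) && in_star_fuel X n' (drop i x))
           (iota 1 (size x))
  end.

Definition in_star (X : seq word) (x : word) : bool := in_star_fuel X (size x) x.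

Definition has_suffix_in (X : seq word) (v : word) : bool := has (fun x => suffix x v) X.
Definition has_prefix_in (X : seq word) (u : word) : bool := has (fun x => prefix x u) X.

(* delta_X(w): number of parses (v,x,u), w = v x u; a parse is determined by
   the two cut points i <= j of w: v = w[0,i), x = w[i,j), u = w[j,|w|) *)
Definition delta (X : seq word) (w : word) : nat :=
  #|[set ij : 'I_(size w).+1 * 'I_(size w).+1 |
       [&& (ij.1 <= ij.2)%N,
           ~~ has_suffix_in X (take ij.1 w),
           in_star X (drop ij.1 (take ij.2 w)) &
           ~~ has_prefix_in X (drop ij.2 w)]]|.

Definition F_degree (F : pred word) (X : seq word) (d : nat) : Prop :=
  (exists w, F w /\ delta X w = d) /\ (forall w, F w -> (delta X w <= d)%N).

End Words.

(* For a bifix code X, every cut point of w whose left part has no suffix in X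
   extends to exactly one parse, so delta_X(w) counts the prefixes of w with no
   suffix in X (and, symmetrically, the suffixes with no prefix in X).  Hence
   appending a letter raises delta_X by one exactly when the new word has no
   suffix in X.  Weighting the words of F of length n by pi, invariance makes
   the mass of the words of length m >= |x| ending with x equal to pi(x), and
   an induction on n gives
     sum_{|w| = n} pi(w) delta_X(w) = sum_{x in X} pi(x) min(|x|, n + 1).
   Recurrence lets any word of F be followed, through a connecting word, by a
   word of maximal degree d; since delta_X only grows under extension, every
   long word of F has a suffix in X and has degree exactly d.  Taking n beyond
   the longest word of X, the two sides become d and sum_{x in X} |x| pi(x). *)

From Pilot Require Import Defs.
From HB Require Import structures.
From mathcomp Require Import all_boot all_order all_algebra.
Set Implicit Arguments. Unset Strict Implicit. Unset Printing Implicit Defensive.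
Import Order.TTheory GRing.Theory Num.Theory.

Section Words.
Variable A : finType.
Implicit Types (X : seq (seq A)) (p u x y z : seq A).

Lemma prefix_total x y z : prefix x z -> prefix y z -> prefix x y || prefix y x.
Proof.
wlog xy : x y / size x <= size y.
  by move=> H xz yz; case: (leqP (size x) (size y)) => [/H | /ltnW/H]; rewrite // orbC; apply.
rewrite !prefixE => /eqP xz /eqP yz; apply/orP; left.
by rewrite -yz take_takel // xz.
Qed.

Lemma suffix_cat_long x p z : size x <= size z -> suffix x (p ++ z) = suffix x z.
Proof.
move=> xz; apply/idP/idP => [|/suffix_catr //].
by rewrite -!prefix_rev rev_cat !prefixE takel_cat // !size_rev.
Qed.

Lemma has_prefix_in_rev X u :
  has_prefix_in (map rev X) (rev u) = has_suffix_in X u.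
Proof. by rewrite /has_prefix_in has_map; apply: eq_has => x /=; rewrite prefix_rev. Qed.

Definition max_length X := \max_(x <- X) size x.

Lemma size_le_max_length X x : x \in X -> size x <= max_length X.
Proof. by move=> xX; rewrite /max_length (big_rem x xX) leq_maxl. Qed.

Lemma has_suffix_in_catl X p z :
  max_length X <= size z -> has_suffix_in X (p ++ z) = has_suffix_in X z.
Proof.
move=> zX; apply: eq_in_has => x xX /=.
by rewrite suffix_cat_long // (leq_trans (size_le_max_length xX)).
Qed.

End Words.

Section Factorizations.
Variable A : finType.
Implicit Types (X : seq (seq A)) (u x y z : seq A).

Definition star X x := exists2 s, all (mem X) s & flatten s = x.

Lemma star_nil X : star X [::].
Proof. by exists [::]. Qed.

Lemma star_cat X x y : star X x -> star X y -> star X (x ++ y).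
Proof.
move=> [s sX <-] [t tX <-]; exists (s ++ t); first by rewrite all_cat sX tX.
by rewrite flatten_cat.
Qed.

Lemma star_catl X x y : x \in X -> star X y -> star X (x ++ y).
Proof. by move=> xX; apply: star_cat; exists [:: x]; rewrite /= ?xX ?cats0. Qed.

Lemma star_rev X x : star X x -> star (map rev X) (rev x).
Proof.
move=> [s sX <-]; exists (rev (map rev s)); last by rewrite rev_flatten.
by rewrite all_rev all_map; apply: sub_all sX => y yX /=; rewrite map_f.
Qed.

Section NonemptyCode.
Variable X : seq (seq A).
Hypothesis X_neq0 : [::] \notin X.

Lemma size_code_gt0 x : x \in X -> 0 < size x.
Proof. by move=> xX; rewrite lt0n size_eq0; apply: contraNneq X_neq0 => <-. Qed.

Lemma in_star_fuel_star n x : in_star_fuel X n x -> star X x.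
Proof.
elim: n x => [|n IHn] x /=; first by move/eqP->; apply: star_nil.
case/orP => [/eqP-> | /hasP [i _ /andP [xiX /IHn]]]; first exact: star_nil.
by rewrite -{2}(cat_take_drop i x); apply: star_catl.
Qed.

Lemma star_in_star_fuel n x : star X x -> size x <= n -> in_star_fuel X n x.
Proof.
move=> [s sX <-]; elim: n s sX => [|n IHn] [|y s] //= /andP [yX sX].
  by rewrite leqn0 size_eq0.
rewrite size_cat => ys_le; apply/orP; right; apply/hasP; exists (size y).
  by rewrite mem_iota add1n ltnS leq_addr andbT size_code_gt0.
rewrite take_size_cat // drop_size_cat // yX; apply: IHn => //.
by rewrite -ltnS (leq_trans _ ys_le) // -add1n leq_add2r size_code_gt0.
Qed.

Lemma in_starP x : reflect (star X x) (in_star X x).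
Proof.
by apply: (iffP idP) => [/in_star_fuel_star | /star_in_star_fuel]; apply.
Qed.

Lemma prefix_factorization z :
  exists x u, [/\ z = x ++ u, star X x & ~~ has_prefix_in X u].
Proof.
elim: {z}(size z) {-2}z (leqnn (size z)) => [|n IHn] z.
  rewrite leqn0 size_eq0 => /eqP->; exists [::], [::]; split => //; first exact: star_nil.
  by apply/hasP => -[y yX]; rewrite prefixs0 => /eqP y0; move: X_neq0; rewrite -y0 yX.
case: (boolP (has_prefix_in X z)) => [/hasP [y yX /prefixP [z' ->]] zs|]; last first.
  by exists [::], z; split => //; apply: star_nil.
have z'_le : size z' <= n.
  by rewrite -ltnS (leq_trans _ zs) // size_cat -add1n leq_add2r size_code_gt0.
have [x [u [-> xX uX]]] := IHn z' z'_le.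
by exists (y ++ x), u; rewrite catA; split => //; exact: star_catl.
Qed.

End NonemptyCode.

Definition prefix_code X := forall x y, x \in X -> y \in X -> prefix x y -> x = y.
Definition suffix_code X := forall x y, x \in X -> y \in X -> suffix x y -> x = y.

Lemma suffix_code_rev X : suffix_code X -> prefix_code (map rev X).
Proof.
by move=> sX _ _ /mapP [x xX ->] /mapP [y yX ->]; rewrite prefix_rev => /sX->.
Qed.

Lemma prefix_code_eq X x y z : prefix_code X -> x \in X -> y \in X ->
  prefix x z -> prefix y z -> x = y.
Proof.
move=> pX xX yX xz yz.
by case/orP: (prefix_total xz yz) => [/pX -> | /pX <-].
Qed.

Lemma suffix_code_eq X x y z : suffix_code X -> x \in X -> y \in X ->
  suffix x z -> suffix y z -> x = y.
Proof.
move=> /suffix_code_rev pX xX yX; rewrite -!prefix_rev => xz yz.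
by apply: (inv_inj (@revK _)); apply: (prefix_code_eq pX _ _ xz yz); rewrite map_f.
Qed.

Lemma prefix_factorization_uniq X x u x' u' : prefix_code X ->
  star X x -> star X x' -> ~~ has_prefix_in X u -> ~~ has_prefix_in X u' ->
  x ++ u = x' ++ u' -> x = x'.
Proof.
move=> pX [s sX <-] [s' s'X <-] uX u'X.
elim: s s' sX s'X => [|y s IHs] [|y' s'] //= sX s'X.
- move=> e; case/andP: s'X => y'X _; case/negP: uX; apply/hasP; exists y' => //.
  by rewrite e -catA prefix_prefix.
- move=> e; case/andP: sX => yX _; case/negP: u'X; apply/hasP; exists y => //.
  by rewrite -e -catA prefix_prefix.
case/andP: sX => yX sX; case/andP: s'X => y'X s'X; rewrite -!catA => e.
have yy' : y = y'.
  apply: (prefix_code_eq pX yX y'X (prefix_prefix y (flatten s ++ u))).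
  by rewrite e prefix_prefix.
move: e; rewrite yy' => /(congr1 (drop (size y'))); rewrite !drop_size_cat // => e.
by rewrite (IHs s').
Qed.

Lemma suffix_factorization X z : [::] \notin X ->
  exists u x, [/\ z = u ++ x, star X x & ~~ has_suffix_in X u].
Proof.
move=> X_neq0; have rX_neq0 : [::] \notin map rev X.
  by apply: contra X_neq0 => /mapP [x xX e]; move: xX; rewrite -[x]revK -e.
have [x [u [e xX uX]]] := prefix_factorization rX_neq0 (rev z).
exists (rev u), (rev x); split.
- by rewrite -rev_cat -e revK.
- by move: (star_rev xX); rewrite (mapK (@revK _)).
- by rewrite -has_prefix_in_rev revK.
Qed.

Lemma suffix_factorization_uniq X u x u' x' : suffix_code X ->
  star X x -> star X x' -> ~~ has_suffix_in X u -> ~~ has_suffix_in X u' ->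
  u ++ x = u' ++ x' -> x = x'.
Proof.
move=> /suffix_code_rev pX xX x'X uX u'X e; apply: (inv_inj (@revK _)).
apply: (prefix_factorization_uniq (u := rev u) (u' := rev u') pX
  (star_rev xX) (star_rev x'X)); by rewrite ?has_prefix_in_rev // -!rev_cat e.
Qed.

Lemma count_suffix_code X z : uniq X -> suffix_code X ->
  count (fun x => suffix x z) X = has_suffix_in X z.
Proof.
move=> X_uniq X_suffix; case: (boolP (has_suffix_in X z)) => [/hasP [x0 x0X x0z] | nosuf].
  rewrite (@eq_in_count _ _ (pred1 x0)) ?count_uniq_mem ?x0X // => x xX /=.
  by apply/idP/eqP => [xz | ->//]; apply: (suffix_code_eq X_suffix xX x0X xz x0z).
by apply/eqP; rewrite eqn0Ngt -has_count.
Qed.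

Lemma bifix_codeP X :
  bifix_code X -> [/\ [::] \notin X, prefix_code X & suffix_code X].
Proof. by case=> X_neq0 [pX sX]; split=> //; apply/negP => /X_neq0; rewrite eqxx. Qed.

End Factorizations.

Lemma card_rel_graph n (p : rel nat) (P : pred nat) :
  (forall i j, p i j -> P i) ->
  (forall i, i < n -> P i -> exists2 j, j < n & p i j) ->
  (forall i j j', p i j -> p i j' -> j = j') ->
  #|[set ij : 'I_n * 'I_n | p ij.1 ij.2]| = count P (iota 0 n).
Proof.
move=> pP Pp p_fun; set S := [set _ | _].
have fst_inj : {in S &, injective fst}.
  move=> [i j] [i' j'] /[!inE] /= pij pij' /= ii'; subst i'.
  by congr pair; apply/val_inj/(p_fun _ _ _ pij pij').
have -> : iota 0 n = index_iota 0 n by rewrite /index_iota subn0.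
rewrite -(card_in_imset fst_inj) -sum1_count big_mkord -sum1_card.
apply: eq_bigl => i; apply/imsetP/idP => [[[_ j] /[!inE] /pP Pi ->] // | Pi].
have [j jn pij] := Pp i (ltn_ord i) Pi.
by exists (i, Ordinal jn); rewrite ?inE.
Qed.

Lemma card_rel_swap n (p : rel nat) :
  #|[set ij : 'I_n * 'I_n | p ij.1 ij.2]| = #|[set ij : 'I_n * 'I_n | p ij.2 ij.1]|.
Proof.
by rewrite -(card_preimset _ (can_inj swap_pairK)); apply: eq_card => ij; rewrite !inE.
Qed.

Section Parses.
Variables (A : finType) (X : seq (seq A)).
Hypotheses (X_neq0 : [::] \notin X) (X_prefix : prefix_code X) (X_suffix : suffix_code X).
Implicit Types (w : seq A) (i j : nat).

Definition parse w i j := [&& i <= j, j <= size w, ~~ has_suffix_in X (take i w),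
  in_star X (drop i (take j w)) & ~~ has_prefix_in X (drop j w)].

Lemma parse_fun_right w i j j' : parse w i j -> parse w i j' -> j = j'.
Proof.
have split_at k : i <= k -> k <= size w ->
  drop i (take k w) = take (k - i) (drop i w) /\ drop k w = drop (k - i) (drop i w).
  by move=> ik kw; rewrite take_drop drop_drop subnK.
case/and5P => ij jw _ /(in_starP X_neq0) xX uX.
case/and5P => ij' j'w _ /(in_starP X_neq0) x'X u'X.
have [ex eu] := split_at j ij jw; have [ex' eu'] := split_at j' ij' j'w.
rewrite ex eu in xX uX; rewrite ex' eu' in x'X u'X.
have := prefix_factorization_uniq X_prefix xX x'X uX u'X; rewrite !cat_take_drop.
move=> /(_ erefl) /(congr1 size); rewrite !size_takel ?size_drop ?leq_sub2r //.
by move=> e; rewrite -(subnK ij) -(subnK ij') e.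
Qed.

Lemma parse_exists_right w i : i <= size w -> ~~ has_suffix_in X (take i w) ->
  exists2 j, j < (size w).+1 & parse w i j.
Proof.
move=> iw vX; have [x [u [e xX uX]]] := prefix_factorization X_neq0 (drop i w).
have xu_size : size x + size u = size w - i by rewrite -size_cat -e size_drop.
have jw : i + size x <= size w by rewrite -leq_subRL // -xu_size leq_addr.
exists (i + size x); first by rewrite ltnS.
apply/and5P; split => //; first exact: leq_addr.
  by rewrite addnC -take_drop e take_size_cat //; apply/(in_starP X_neq0).
by rewrite addnC -drop_drop e drop_size_cat.
Qed.

Lemma parse_fun_left w i i' j : parse w i j -> parse w i' j -> i = i'.
Proof.
case/and5P => ij jw vX /(in_starP X_neq0) xX _.
case/and5P => i'j _ v'X /(in_starP X_neq0) x'X _.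
rewrite -(take_takel _ ij) in vX; rewrite -(take_takel _ i'j) in v'X.
have := suffix_factorization_uniq X_suffix xX x'X vX v'X; rewrite !cat_take_drop.
move=> /(_ erefl) /(congr1 size); rewrite !size_drop size_takel // => e.
by rewrite -(subKn ij) -(subKn i'j) e.
Qed.

Lemma parse_exists_left w j : j <= size w -> ~~ has_prefix_in X (drop j w) ->
  exists2 i, i < (size w).+1 & parse w i j.
Proof.
move=> jw uX; have [v [x [e xX vX]]] := suffix_factorization (take j w) X_neq0.
have vx_size : size v + size x = j by rewrite -size_cat -e size_takel.
have ij : size v <= j by rewrite -vx_size leq_addr.
exists (size v); first by rewrite ltnS (leq_trans ij).
apply/and5P; split => //; first by rewrite -(take_takel _ ij) e take_size_cat.
by rewrite e drop_size_cat //; apply/(in_starP X_neq0).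
Qed.

Lemma delta_parse w :
  delta X w = #|[set ij : 'I_(size w).+1 * 'I_(size w).+1 | parse w ij.1 ij.2]|.
Proof. by apply: eq_card => ij; rewrite !inE /parse -[_ <= size w]ltnS ltn_ord. Qed.

Lemma delta_prefix_count w :
  delta X w = count (fun i => ~~ has_suffix_in X (take i w)) (iota 0 (size w).+1).
Proof.
rewrite delta_parse; apply: card_rel_graph; first by move=> i j /and5P [].
  by move=> i; rewrite ltnS; apply: parse_exists_right.
exact: parse_fun_right.
Qed.

Lemma delta_suffix_count w :
  delta X w = count (fun j => ~~ has_prefix_in X (drop j w)) (iota 0 (size w).+1).
Proof.
rewrite delta_parse card_rel_swap.
apply: (card_rel_graph (p := fun j i => parse w i j)); first by move=> j i /and5P [].
  by move=> j; rewrite ltnS; apply: parse_exists_left.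
by move=> j i i' /parse_fun_left/[apply].
Qed.

Lemma delta_rcons w a :
  delta X (rcons w a) = delta X w + ~~ has_suffix_in X (rcons w a).
Proof.
rewrite !delta_prefix_count size_rcons -addn1 iotaD count_cat add0n; congr (_ + _).
  by apply: eq_in_count => i; rewrite mem_iota ltnS => /= iw; rewrite -cats1 takel_cat.
by rewrite /= addn0 take_oversize ?size_rcons.
Qed.

Lemma delta_cons a w :
  delta X (a :: w) = ~~ has_prefix_in X (a :: w) + delta X w.
Proof.
by rewrite !delta_suffix_count /= -add1n iotaDl count_map drop0.
Qed.

Lemma delta_nil : delta X [::] = 1%N.
Proof.
suff /negbTE no_suffix : ~~ has_suffix_in X [::] by rewrite delta_prefix_count /= no_suffix.
by apply/hasP => -[x xX]; rewrite suffixs0 => /eqP x0; move: X_neq0; rewrite -x0 xX.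
Qed.

Lemma leq_delta_catr w t : delta X w <= delta X (w ++ t).
Proof.
elim/last_ind: t => [|t a IHt]; first by rewrite cats0.
by rewrite -rcons_cat delta_rcons (leq_trans IHt) ?leq_addr.
Qed.

Lemma leq_delta_catl w t : delta X w <= delta X (t ++ w).
Proof. by elim: t => [|a t IHt] //=; rewrite delta_cons (leq_trans IHt) ?leq_addl. Qed.

End Parses.

Section LongWords.
Variables (A : finType) (X : seq (seq A)) (F : pred (seq A)) (d : nat).
Hypotheses (X_neq0 : [::] \notin X) (X_prefix : prefix_code X) (X_suffix : suffix_code X).
Hypothesis F_fact : Defs.factorial F.
Hypothesis F_rec : forall u w, F u -> F w -> exists v, F v /\ F (u ++ v ++ w).
Hypothesis X_degree : F_degree F X d.

Lemma long_has_suffix z : F z -> 0 < size z -> max_length X <= size z ->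
  has_suffix_in X z.
Proof.
(* Otherwise [w0 v z], with [w0] of degree [d], would have degree [d + 1]. *)
move=> Fz z_gt0 zX; apply/negPn/negP => z_nosuf.
case: X_degree => [[w0 [Fw0 dw0]] d_max].
have [v [_ Fw0vz]] := F_rec Fw0 Fz.
case/lastP: z Fz z_gt0 zX z_nosuf Fw0vz => // z a _ _ zX z_nosuf.
have : ~~ has_suffix_in X ((w0 ++ v) ++ rcons z a) by rewrite has_suffix_in_catl.
rewrite catA -!rcons_cat => w0vza_nosuf /d_max.
by rewrite delta_rcons // w0vza_nosuf addn1 ltnNge -dw0 -catA leq_delta_catr.
Qed.

Lemma delta_long w : F w -> 0 < size w -> max_length X <= size w -> delta X w = d.
Proof.
move=> Fw w_gt0 wX; case: X_degree => [[w0 [Fw0 dw0]] d_max].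
have delta_ext t : F (w ++ t) -> delta X (w ++ t) = delta X w.
  elim/last_ind: t => [|t a IHt]; first by rewrite cats0.
  rewrite -rcons_cat => Fwta.
  have Fwt : F (w ++ t) by apply: (F_fact (u := [::]) (w := [:: a])); rewrite /= cats1.
  rewrite delta_rcons // long_has_suffix ?addn0 ?IHt ?size_rcons //.
  by rewrite size_cat (leq_trans wX) // -addnS leq_addr.
have [v [_ Fwvw0]] := F_rec Fw Fw0.
apply/eqP; rewrite eqn_leq d_max //= -(delta_ext _ Fwvw0) -dw0 catA.
exact: leq_delta_catl.
Qed.

End LongWords.

Local Open Scope ring_scope.

Section WordSums.
Variables (A : finType) (R : nmodType) (F : pred (seq A)).
Hypothesis F_fact : Defs.factorial F.
Implicit Types (g : seq A -> R) (w z : seq A).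

Definition words n : seq (seq A) := map val (enum {: n.-tuple A}).

Lemma mem_words n z : (z \in words n) = (size z == n).
Proof.
apply/mapP/idP => [[t _ ->] | /eqP zn]; first by rewrite size_tuple.
by exists (Tuple (introT eqP zn)); rewrite ?mem_enum.
Qed.

Lemma words_uniq n : uniq (words n).
Proof. by rewrite map_inj_uniq ?enum_uniq //; apply: val_inj. Qed.

Definition sumF n g := \sum_(z <- words n | F z) g z.

Lemma eq_sumF n g g' : (forall z, F z -> size z = n -> g z = g' z) -> sumF n g = sumF n g'.
Proof.
move=> gg'; rewrite /sumF !(big_seq_cond F); apply: eq_bigr => z /andP [].
by rewrite mem_words => /eqP zn Fz; apply: gg'.
Qed.

Lemma sumF0 g : F [::] -> sumF 0 g = g [::].
Proof.
move=> F_nil; have words0 : words 0 = [:: [::]].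
  by apply/perm_small_eq/uniq_perm => // [|z]; rewrite ?words_uniq // mem_words inE size_eq0.
by rewrite /sumF words0 big_cons big_nil F_nil addr0.
Qed.

Lemma sumF_split n (ext : seq A -> A -> seq A) g :
  (forall w a, size (ext w a) = (size w).+1) ->
  (forall z, (0 < size z)%N -> exists w a, z = ext w a) ->
  injective (fun wa => ext wa.1 wa.2) ->
  (forall w a, F (ext w a) -> F w) ->
  sumF n.+1 g = sumF n (fun w => \sum_(a | F (ext w a)) g (ext w a)).
Proof.
move=> ext_size ext_onto ext_inj ext_F.
have perm : perm_eq (words n.+1) [seq ext w a | w <- words n, a <- index_enum A].
  apply: uniq_perm; first exact: words_uniq.
    apply: allpairs_uniq; [exact: words_uniq | exact: index_enum_uniq |].
    by move=> [w a] [w' a'] _ _ /(ext_inj (w, a) (w', a')).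
  move=> z; rewrite mem_words; apply/idP/allpairsP => [/eqP zn | [[w a] /= [wn _ ->]]].
    have [w [a ez]] : exists w a, z = ext w a by apply: ext_onto; rewrite zn.
    by exists (w, a); rewrite /= mem_words mem_index_enum -eqSS -(ext_size w a) -ez zn.
  by rewrite ext_size eqSS -mem_words.
rewrite /sumF (perm_big _ perm) big_mkcond big_allpairs_dep /= [RHS]big_mkcond.
apply: eq_bigr => w _; case: (boolP (F w)) => Fw; first by rewrite [RHS]big_mkcond.
by apply: big1 => a _; case: ifP => // /ext_F; rewrite (negbTE Fw).
Qed.

Lemma sumF_rcons n g :
  sumF n.+1 g = sumF n (fun w => \sum_(a | F (rcons w a)) g (rcons w a)).
Proof.
apply: sumF_split => [w a | z | [w a] [w' a'] /rcons_inj // | w a Fwa].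
- exact: size_rcons.
- by case/lastP: z => // w a _; exists w, a.
by apply: (F_fact (u := [::]) (w := [:: a])); rewrite /= cats1.
Qed.

Lemma sumF_cons n g :
  sumF n.+1 g = sumF n (fun w => \sum_(a | F (a :: w)) g (a :: w)).
Proof.
apply: (@sumF_split n (fun w a => a :: w)) => [// | z | [w a] [w' a'] [-> ->] // | w a Fwa].
- by case: z => // a w _; exists w, a.
by apply: (F_fact (u := [:: a]) (w := [::])); rewrite /= cats0.
Qed.

End WordSums.

Section MeanLength.
Variables (A : finType) (R : realFieldType) (F : pred (seq A)) (pi : seq A -> R).
Variables (X : seq (seq A)) (d : nat).
Hypotheses (F_fact : Defs.factorial F) (F_nil : F [::]).
Hypothesis F_rec : forall u w, F u -> F w -> exists v, F v /\ F (u ++ v ++ w).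
Hypothesis pi_inv : invariant_prob F pi.
Hypotheses (X_uniq : uniq X) (X_in_F : forall x, x \in X -> F x).
Hypotheses (X_neq0 : [::] \notin X) (X_prefix : prefix_code X) (X_suffix : suffix_code X).
Hypothesis X_degree : F_degree F X d.

Let pi_nil : pi [::] = 1 := pi_inv.2.1.
Let sum_pi_rcons w (Fw : F w) : \sum_(a | F (rcons w a)) pi (rcons w a) = pi w :=
  (pi_inv.2.2 w Fw).1.
Let sum_pi_cons w (Fw : F w) : \sum_(a | F (a :: w)) pi (a :: w) = pi w :=
  (pi_inv.2.2 w Fw).2.

Lemma sumF_suffix x m : F x ->
  sumF F m (fun z => pi z *+ suffix x z) = pi x *+ (size x <= m)%N.
Proof.
move=> Fx; case: (leqP (size x) m) => [xm | mx]; last first.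
  rewrite (eq_sumF (g' := fun=> 0)) /sumF ?big1 // => z _ zm.
  by case: (boolP (suffix x z)) => // /size_suffix; rewrite zm leqNgt mx.
rewrite mulr1n -(subnK xm); elim: (m - size x)%N => [|k IHk].
  rewrite add0n /sumF big_mkcond (bigD1_seq x) ?mem_words ?words_uniq //= Fx suffix_refl.
  rewrite big1_seq ?addr0 // => z /andP [zx]; rewrite mem_words => /eqP zx_size.
  by case: (F z); rewrite // suffixE zx_size subnn drop0 (negbTE zx).
rewrite addSn sumF_cons // -IHk; apply: eq_sumF => w Fw w_size.
under eq_bigr do rewrite -cat1s suffix_cat_long ?w_size ?leq_addl //.
by rewrite sumrMnl sum_pi_cons.
Qed.

Lemma sumF_pi n : sumF F n pi = 1.
Proof.
rewrite -pi_nil -[RHS]mulr1n -(sumF_suffix n F_nil).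
by apply: eq_sumF => z _ _; rewrite suffix0s mulr1n.
Qed.

Lemma sumF_no_suffix m :
  sumF F m (fun z => pi z *+ ~~ has_suffix_in X z) = 1 - \sum_(x <- X) pi x *+ (size x <= m)%N.
Proof.
have sum_suffix z : \sum_(x <- X) pi z *+ suffix x z = pi z *+ has_suffix_in X z.
  rewrite sumrMnr -count_suffix_code // -sum1_count.
  by congr (_ *+ _); rewrite [RHS]big_mkcond; apply: eq_bigr => x _; case: suffix.
rewrite (eq_sumF (g' := fun z => pi z - \sum_(x <- X) pi z *+ suffix x z)); last first.
  by move=> z _ _; rewrite sum_suffix; case: has_suffix_in; rewrite ?subrr ?subr0.
rewrite /sumF sumrB -/(sumF F m pi) sumF_pi // exchange_big /=.
by congr (_ - _); apply: eq_big_seq => x xX; apply: sumF_suffix; rewrite ?X_in_F.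
Qed.

Lemma sum_pi_code : \sum_(x <- X) pi x = 1.
Proof.
have := sumF_no_suffix (max_length X).+1.
rewrite (eq_sumF (g' := fun=> 0)) => [|z Fz z_size]; last first.
  by rewrite (long_has_suffix X_neq0 X_prefix F_rec X_degree) ?z_size.
rewrite /sumF big1 // => /esym/eqP; rewrite subr_eq0 => /eqP ->.
by apply: eq_big_seq => x xX; rewrite leqW ?size_le_max_length.
Qed.

Lemma sumF_delta_succ n :
  sumF F n.+1 (fun z => pi z *+ delta X z) =
  sumF F n (fun z => pi z *+ delta X z) + sumF F n.+1 (fun z => pi z *+ ~~ has_suffix_in X z).
Proof.
rewrite !sumF_rcons // /sumF -big_split; apply: eq_bigr => w Fw /=.
rewrite -(sum_pi_rcons Fw) -sumrMnl -big_split.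
by apply: eq_bigr => a _; rewrite delta_rcons // mulrnDr.
Qed.

Lemma sumF_delta n :
  sumF F n (fun z => pi z *+ delta X z) = \sum_(x <- X) pi x *+ minn (size x) n.+1.
Proof.
elim: n => [|n IHn].
  rewrite sumF0 // delta_nil // pi_nil -sum_pi_code.
  by apply: eq_big_seq => x xX; rewrite (minn_idPr _) ?mulr1n ?(size_code_gt0 X_neq0).
rewrite sumF_delta_succ IHn sumF_no_suffix -{1}sum_pi_code -sumrB -big_split /=.
apply: eq_bigr => x _.
have -> : pi x - pi x *+ (size x <= n.+1)%N = pi x *+ (n.+1 < size x)%N.
  by rewrite ltnNge; case: leqP; rewrite ?subrr ?subr0.
rewrite -mulrnDr; congr (_ *+ _); case: leqP => xn.
  by rewrite !(minn_idPl _) ?addn0 // leqW.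
by rewrite !(minn_idPr _) ?addn1 // ltnW.
Qed.

Lemma sumF_delta_long : sumF F (max_length X).+1 (fun z => pi z *+ delta X z) = d%:R.
Proof.
rewrite (eq_sumF (g' := fun z => pi z *+ d)) => [|z Fz z_size].
  by rewrite /sumF sumrMnl -/(sumF F _ pi) sumF_pi.
by rewrite (delta_long X_neq0 X_prefix X_suffix F_fact F_rec X_degree) ?z_size.
Qed.

Lemma sum_size_pi_code : \sum_(x <- X) (size x)%:R * pi x = d%:R.
Proof.
rewrite -sumF_delta_long sumF_delta; apply: eq_big_seq => x xX.
by rewrite mulr_natl (minn_idPl _) // !leqW // size_le_max_length.
Qed.

End MeanLength.

Theorem mainTheorem6 (A : finType) (R : realFieldType)
  (F : pred (seq A)) (pi : seq A -> R) (X : seq (seq A)) (d : nat) :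
  recurrent F ->
  invariant_prob F pi -> positive_on F pi ->
  uniq X -> (forall x, x \in X -> F x) -> bifix_code X ->
  F_degree F X d ->
  \sum_(x <- X) (size x)%:R * pi x = d%:R.
Proof.
move=> [[w Fw] [F_fact F_rec]] pi_inv _ X_uniq X_in_F.
move=> /bifix_codeP [X_neq0 X_prefix X_suffix] X_degree.
have F_nil : F [::] by apply: (F_fact w [::] [::]); rewrite !cats0.
exact: (sum_size_pi_code F_fact F_nil F_rec pi_inv X_uniq X_in_F
  X_neq0 X_prefix X_suffix X_degree).
Qed.
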